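(* Let $M$ be a positive integer and let $K$ be an integer with $q_{KL}-1\le K\le M$. Then \[\mathcal U(M)\cap\mathcal U(K)=(1,K+1]\cap\mathcal U(M).\]
   Context: For a positive integer $J$, $\mathcal U(J)$ is the set of $q\in(1,J+1]$ such that $1$ has exactly one expansion $1=\sum_{i\ge1}d_iq^{-i}$ with $d_i\in\{0,1,\dots,J\}$. For $q\in(1,M+1]$, $\alpha(q)$ is the quasi-greedy $q$-expansion of $1$ over $\{0,1,\dots,M\}$ (lexicographically largest sequence not ending in $0^\infty$ with $\sum a_iq^{-i}=1$). Let $(\tau_i)_{i\ge0}$ be the Thue–Morse sequence; $q_{KL}=q_{KL}(M)$ is the base with $\alpha(q_{KL})=\lambda_1\lambda_2\dots$, $\lambda_i=k+\tau_i-\tau_{i-1}$ if $M=2k$, $\lambda_i=k+\tau_i$ if $M=2k+1$. *)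

From Stdlib Require Import Reals Arith.
Open Scope R_scope.

(* Digit sequences are d : nat -> nat, with d j standing for the paper's d_(j+1),
   so that sum_(i>=1) d_i q^(-i) = sum_(j>=0) d j / q^(j+1). *)

Definition is_expansion (J : nat) (q : R) (d : nat -> nat) : Prop :=
  (forall j, (d j <= J)%nat) /\
  infinite_sum (fun j => INR (d j) / q ^ (S j)) 1.

Definition U (J : nat) (q : R) : Prop :=
  1 < q <= INR J + 1 /\
  (exists d, is_expansion J q d) /\
  (forall d1 d2, is_expansion J q d1 -> is_expansion J q d2 -> forall j, d1 j = d2 j).

Definition lex_le (b a : nat -> nat) : Prop :=
  (forall j, b j = a j) \/
  (exists n, (forall i, (i < n)%nat -> b i = a i) /\ (b n < a n)%nat).

Definition not_ending_zero (a : nat -> nat) : Prop :=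
  forall N, exists n, (N <= n)%nat /\ a n <> 0%nat.

Definition is_quasi_greedy (M : nat) (q : R) (a : nat -> nat) : Prop :=
  is_expansion M q a /\ not_ending_zero a /\
  (forall b, is_expansion M q b -> not_ending_zero b -> lex_le b a).

Fixpoint popc (fuel n : nat) : nat :=
  match fuel with
  | O => O
  | S f => if Nat.eqb n 0 then O else (n mod 2 + popc f (n / 2))%nat
  end.
Definition tau (n : nat) : nat := (popc n n mod 2)%nat.

(* lambda_i (i >= 1), stored as lam M j = lambda_(j+1) *)
Definition lam (M : nat) (j : nat) : nat :=
  if Nat.even M then (M / 2 + tau (S j) - tau j)%nat
  else (M / 2 + tau (S j))%nat.

(* If q <= K + 1 and the unique expansion d of 1 over {0,...,M} had a digit
   larger than K, take the first one, d n.  For n = 0, d 0 >= K + 1 >= q forces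
   d 0 = q with a zero tail, so lowering d 0 by one and expanding 1 greedily in
   the tail gives a second expansion.  For n > 0 the tail starting at n is worth
   at least (K + 1) / q >= 1, so d (n - 1) <= K < M can be raised by one and the
   tail, diminished by 1, re-expanded greedily.  Hence every q in U(M) below
   K + 1 lies in U(K). *)

From Stdlib Require Import Reals Lra Lia ClassicalEpsilon.
From Coquelicot Require Import Coquelicot.
Open Scope R_scope.

Lemma is_series_le (a b : nat -> R) (la lb : R) :
  (forall n, a n <= b n) -> is_series a la -> is_series b lb -> la <= lb.
Proof.
  intros Hab Ha Hb.
  apply (is_lim_seq_le (sum_n a) (sum_n b) la lb); [|exact Ha|exact Hb].
  intro n. rewrite !sum_n_Reals. now apply sum_growing.
Qed.

Lemma is_series_nonneg (a : nat -> R) (l : R) :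
  (forall n, 0 <= a n) -> is_series a l -> 0 <= l.
Proof.
  intros Ha Hl.
  apply (is_lim_seq_le (fun _ => 0) (sum_n a) 0 l); [|apply is_lim_seq_const|exact Hl].
  intro n. rewrite sum_n_Reals. now apply cond_pos_sum.
Qed.

Lemma is_series_shift (a : nat -> R) (l : R) :
  is_series a l <-> is_series (fun k => a (S k)) (l - a O).
Proof.
  split; intro H.
  - apply is_series_incr_1. unfold plus; simpl.
    now replace (l - a O + a O) with l by ring.
  - apply is_series_decr_1. exact H.
Qed.

Lemma is_series_scal_R (c : R) (a : nat -> R) (l : R) :
  is_series a l -> is_series (fun n => c * a n) (c * l).
Proof. exact (is_series_scal c a l). Qed.

Section Tails.

Variable q : R.
Hypothesis q_neq0 : q <> 0.

Definition tail_terms (d : nat -> nat) (n : nat) (j : nat) : R :=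
  INR (d (n + j)%nat) / q ^ S j.

Lemma tail_terms_succ d n j : tail_terms d n (S j) = / q * tail_terms d (S n) j.
Proof.
  unfold tail_terms. rewrite Nat.add_succ_r. simpl.
  assert (q ^ j <> 0) by now apply pow_nonzero.
  field; auto.
Qed.

Lemma is_series_tail_cons d n y :
  is_series (tail_terms d (S n)) y ->
  is_series (tail_terms d n) ((INR (d n) + y) / q).
Proof.
  intro Hy. apply is_series_shift.
  apply (is_series_ext (fun j => / q * tail_terms d (S n) j)).
  { intro j. now rewrite tail_terms_succ. }
  replace ((INR (d n) + y) / q - tail_terms d n 0) with (/ q * y).
  - now apply is_series_scal_R.
  - unfold tail_terms. rewrite Nat.add_0_r. simpl. field; auto.
Qed.

Lemma is_series_tail_behead d n l :
  is_series (tail_terms d n) l ->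
  is_series (tail_terms d (S n)) (q * l - INR (d n)).
Proof.
  intro Hl. apply is_series_shift, (is_series_scal_R q) in Hl.
  apply (is_series_ext (fun j => q * tail_terms d n (S j))).
  { intro j. simpl. rewrite tail_terms_succ. field; auto. }
  replace (q * l - INR (d n)) with (q * (l - tail_terms d n 0)); [exact Hl|].
  unfold tail_terms. rewrite Nat.add_0_r. simpl. field; auto.
Qed.

(* [remainder d n] is the value that the tail [d n, d (S n), ...] must have
   for [d] to expand 1, i.e. q^n (1 - sum_(j<n) d j / q^(j+1)). *)
Fixpoint remainder (d : nat -> nat) (n : nat) : R :=
  match n with
  | O => 1
  | S n => q * remainder d n - INR (d n)
  end.

Lemma remainder_cons d n : remainder d n = (INR (d n) + remainder d (S n)) / q.
Proof. simpl. field; auto. Qed.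

Lemma is_series_tail_remainder d :
  is_series (tail_terms d 0) 1 -> forall n, is_series (tail_terms d n) (remainder d n).
Proof.
  intros H1 n. induction n as [|n IH]; [exact H1|].
  now apply is_series_tail_behead.
Qed.

Lemma is_series_prefix_tail d e n :
  (forall j, (j < n)%nat -> e j = d j) ->
  is_series (tail_terms e n) (remainder d n) -> is_series (tail_terms e 0) 1.
Proof.
  induction n as [|n IH]; intros Hed He; [exact He|].
  apply IH; [intros j Hj; apply Hed; lia|].
  rewrite remainder_cons, <- (Hed n) by lia.
  now apply is_series_tail_cons.
Qed.

End Tails.

Section Greedy.

Variables (M : nat) (q : R).
Hypothesis q_gt1 : 1 < q.
Hypothesis q_le : q <= INR M + 1.

Definition max_value : R := INR M / (q - 1).

Lemma Rabs_inv_base_lt1 : Rabs (/ q) < 1.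
Proof.
  rewrite Rabs_pos_eq by (left; apply Rinv_0_lt_compat; lra).
  rewrite <- Rinv_1. apply Rinv_lt_contravar; lra.
Qed.

Lemma max_value_ge1 : 1 <= max_value.
Proof.
  unfold max_value. apply (Rmult_le_reg_r (q - 1)); [lra|].
  unfold Rdiv. rewrite Rmult_assoc, Rinv_l; lra.
Qed.

Lemma max_value_fixpoint : q * max_value - INR M = max_value.
Proof. unfold max_value. field. lra. Qed.

Lemma is_series_max_value : is_series (fun j => INR M / q ^ S j) max_value.
Proof.
  apply (is_series_ext (fun j => INR M / q * (/ q) ^ j)).
  { intro j. rewrite pow_inv. simpl.
    assert (q ^ j <> 0) by (apply pow_nonzero; lra). field; lra. }
  replace max_value with (INR M / q * / (1 - / q)).
  - apply is_series_scal_R, is_series_geom, Rabs_inv_base_lt1.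
  - unfold max_value. field. lra.
Qed.

Lemma tail_value_bounds d n x :
  (forall j, (d j <= M)%nat) -> is_series (tail_terms q d n) x -> 0 <= x <= max_value.
Proof.
  intros Hd Hx.
  assert (Hpow : forall j, 0 < / q ^ S j) by (intro; apply Rinv_0_lt_compat, pow_lt; lra).
  split.
  - refine (is_series_nonneg _ _ _ Hx). intro j.
    apply Rmult_le_pos; [apply pos_INR|now left].
  - refine (is_series_le _ _ _ _ _ Hx is_series_max_value). intro j.
    apply Rmult_le_compat_r; [now left|]. apply le_INR, Hd.
Qed.

Lemma nat_floor_lt (n : nat) (y : R) :
  0 <= y < INR n -> exists k, (k < n)%nat /\ INR k <= y < INR k + 1.
Proof.
  induction n as [|n IH]; intros [Hy0 Hyn]; [simpl in Hyn; lra|].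
  destruct (Rlt_le_dec y (INR n)) as [Hlt|Hge].
  - destruct IH as [k [Hk Hky]]; [lra|]. exists k. split; [lia|exact Hky].
  - exists n. rewrite S_INR in Hyn. split; [lia|lra].
Qed.

Lemma greedy_digit_exists r :
  0 <= r <= max_value -> exists k, (k <= M)%nat /\ 0 <= q * r - INR k <= max_value.
Proof.
  intro Hr.
  assert (H1 := max_value_ge1). assert (HM := max_value_fixpoint).
  destruct (Rle_lt_dec (INR M) (q * r)) as [Hge|Hlt].
  - exists M. split; [lia|nra].
  - destruct (nat_floor_lt M (q * r)) as [k [Hk Hkr]]; [nra|].
    exists k. split; [lia|lra].
Qed.

Definition greedy_digit (r : R) : nat :=
  epsilon (inhabits 0%nat) (fun k => (k <= M)%nat /\ 0 <= q * r - INR k <= max_value).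

Lemma greedy_digit_spec r : 0 <= r <= max_value ->
  (greedy_digit r <= M)%nat /\ 0 <= q * r - INR (greedy_digit r) <= max_value.
Proof. intro Hr. unfold greedy_digit. apply epsilon_spec, greedy_digit_exists, Hr. Qed.

Fixpoint greedy_remainder (x : R) (n : nat) : R :=
  match n with
  | O => x
  | S n => q * greedy_remainder x n - INR (greedy_digit (greedy_remainder x n))
  end.

Definition greedy_digits (x : R) (n : nat) : nat := greedy_digit (greedy_remainder x n).

Section GreedyValue.

Variable x : R.
Hypothesis x_bounds : 0 <= x <= max_value.

Lemma greedy_remainder_bounds n : 0 <= greedy_remainder x n <= max_value.
Proof.
  induction n as [|n IH]; [exact x_bounds|].
  apply greedy_digit_spec, IH.
Qed.

Lemma greedy_digits_le n : (greedy_digits x n <= M)%nat.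
Proof. apply greedy_digit_spec, greedy_remainder_bounds. Qed.

Lemma greedy_partial_sum n :
  sum_n (tail_terms q (greedy_digits x) 0) n = x - greedy_remainder x (S n) / q ^ S n.
Proof.
  assert (Hpow : forall k, q ^ k <> 0) by (intro; apply pow_nonzero; lra).
  rewrite sum_n_Reals. unfold tail_terms, greedy_digits.
  induction n as [|n IH].
  - simpl. field. lra.
  - rewrite tech5, IH. simpl. field. split; [apply Hpow|lra].
Qed.

Lemma is_series_greedy : is_series (tail_terms q (greedy_digits x) 0) x.
Proof.
  assert (Hpow : forall n, 0 < q ^ n) by (intro; apply pow_lt; lra).
  assert (Herr : is_lim_seq (fun n => greedy_remainder x (S n) / q ^ S n) 0).
  { apply (is_lim_seq_le_le (fun _ => 0) _ (fun n => max_value * (/ q) ^ S n)).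
    - intro n. rewrite pow_inv.
      destruct (greedy_remainder_bounds (S n)). specialize (Hpow (S n)).
      split; [apply Rdiv_le_0_compat; lra|].
      apply Rmult_le_compat_r; [left; apply Rinv_0_lt_compat|]; lra.
    - apply is_lim_seq_const.
    - replace (Finite 0) with (Rbar_mult max_value 0) by (simpl; f_equal; ring).
      apply is_lim_seq_scal_l, (is_lim_seq_incr_1 (fun n => (/ q) ^ n)).
      apply is_lim_seq_geom, Rabs_inv_base_lt1. }
  enough (H : is_lim_seq (sum_n (tail_terms q (greedy_digits x) 0)) x) by exact H.
  apply (is_lim_seq_ext (fun n => x - greedy_remainder x (S n) / q ^ S n)).
  { intro n. symmetry. apply greedy_partial_sum. }
  replace (Finite x) with (Finite (x - 0)) by (f_equal; ring).
  apply is_lim_seq_minus'; [apply is_lim_seq_const|exact Herr].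
Qed.

End GreedyValue.

Lemma greedy_expansion_exists x : 0 <= x <= max_value ->
  exists g, (forall j, (g j <= M)%nat) /\ is_series (tail_terms q g 0) x.
Proof.
  intro Hx. exists (greedy_digits x).
  split; [apply greedy_digits_le, Hx|apply is_series_greedy, Hx].
Qed.

End Greedy.

Lemma is_expansion_series (J : nat) (q : R) (d : nat -> nat) :
  is_expansion J q d <-> (forall j, (d j <= J)%nat) /\ is_series (tail_terms q d 0) 1.
Proof.
  unfold is_expansion. split; intros [Hd Hs]; split; try exact Hd;
    now apply is_series_Reals.
Qed.

Lemma is_expansion_widen (J J' : nat) (q : R) (d : nat -> nat) :
  (J <= J')%nat -> is_expansion J q d -> is_expansion J' q d.
Proof.
  intros HJ [Hd Hs]. split; [|exact Hs].
  intro j. specialize (Hd j). lia.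
Qed.

Section UniqueExpansion.

Variables (M : nat) (q : R).
Hypothesis q_gt1 : 1 < q.
Hypothesis q_le : q <= INR M + 1.
Variable d : nat -> nat.
Hypothesis d_expansion : is_expansion M q d.
Hypothesis expansion_unique : forall d1 d2,
  is_expansion M q d1 -> is_expansion M q d2 -> forall j, d1 j = d2 j.

Lemma remainder_bounds n : 0 <= remainder q d n <= max_value M q.
Proof.
  apply is_expansion_series in d_expansion as [Hd Hs].
  apply (tail_value_bounds M q q_gt1 d n); [exact Hd|].
  apply is_series_tail_remainder; [lra|exact Hs].
Qed.

(* The prefix of [d] followed by [c] and a greedy expansion of [y] is another
   expansion of 1. *)
Lemma unique_expansion_rewrite_digit n c y :
  (c <= M)%nat -> 0 <= y <= max_value M q ->
  INR c + y = INR (d n) + remainder q d (S n) -> c = d n.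
Proof.
  intros Hc Hy Hcy.
  assert (Hq0 : q <> 0) by lra.
  destruct (greedy_expansion_exists M q q_gt1 q_le y Hy) as [g [Hg Hgs]].
  pose (e j := if (j <? n)%nat then d j else if (j =? n)%nat then c else g (j - S n)%nat).
  assert (He_n : e n = c) by (unfold e; now rewrite Nat.ltb_irrefl, Nat.eqb_refl).
  assert (He_tail : is_series (tail_terms q e (S n)) y).
  { refine (is_series_ext _ _ _ _ Hgs). intro j. unfold tail_terms, e.
    destruct (Nat.ltb_spec (S n + j) n); [lia|].
    destruct (Nat.eqb_spec (S n + j) n); [lia|].
    now replace (S n + j - S n)%nat with j by lia. }
  assert (He : is_expansion M q e).
  { apply is_expansion_series. split.
    - intro j. unfold e. destruct (Nat.ltb_spec j n); [apply d_expansion|].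
      destruct (Nat.eqb_spec j n); [exact Hc|apply Hg].
    - apply (is_series_prefix_tail q Hq0 d e n).
      + intros j Hj. unfold e. now destruct (Nat.ltb_spec j n); [|lia].
      + rewrite (remainder_cons q Hq0), <- Hcy, <- He_n.
        exact (is_series_tail_cons q Hq0 e n y He_tail). }
  rewrite <- He_n. apply expansion_unique; assumption.
Qed.

Lemma unique_expansion_digits_le (K : nat) :
  (K <= M)%nat -> q <= INR K + 1 -> forall n, (d n <= K)%nat.
Proof.
  intros HKM HqK.
  assert (Hd := proj1 d_expansion).
  assert (Hbound1 := max_value_ge1 M q q_gt1 q_le).
  induction n as [|n IH].
  - destruct (Nat.le_gt_cases (d 0) K) as [Hle|Hgt]; [exact Hle|exfalso].
    assert (Hd0 : INR K + 1 <= INR (d 0)) by (rewrite <- S_INR; apply le_INR; lia).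
    assert (Hrem1 : remainder q d 1 = 0).
    { destruct (remainder_bounds 1). simpl in *. lra. }
    assert (Hdec : (d 0 - 1)%nat = d 0).
    { apply unique_expansion_rewrite_digit with (y := 1); [specialize (Hd 0%nat); lia|lra|].
      rewrite Hrem1, minus_INR by lia. simpl. ring. }
    lia.
  - destruct (Nat.le_gt_cases (d (S n)) K) as [Hle|Hgt]; [exact Hle|exfalso].
    assert (Hdn : INR K + 1 <= INR (d (S n))) by (rewrite <- S_INR; apply le_INR; lia).
    assert (Hrem_ge1 : 1 <= remainder q d (S n)).
    { rewrite remainder_cons by lra; destruct (remainder_bounds (S (S n))).
      apply (Rmult_le_reg_r q); [lra|]. unfold Rdiv.
      rewrite Rmult_assoc, Rinv_l; lra. }
    assert (Hinc : S (d n) = d n).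
    { apply unique_expansion_rewrite_digit with (y := remainder q d (S n) - 1).
      - specialize (Hd (S n)). lia.
      - destruct (remainder_bounds (S n)). lra.
      - rewrite S_INR. ring. }
    lia.
Qed.

End UniqueExpansion.

Lemma U_restrict (M K : nat) (q : R) :
  (K <= M)%nat -> 1 < q <= INR K + 1 -> U M q -> U K q.
Proof.
  intros HKM Hq [HqM [[d Hd] Huniq]].
  split; [exact Hq|split].
  - exists d. split; [|apply Hd].
    apply (unique_expansion_digits_le M q (proj1 Hq) (proj2 HqM) d Hd Huniq K HKM (proj2 Hq)).
  - intros d1 d2 H1 H2. apply Huniq; now apply (is_expansion_widen K).
Qed.

Theorem lemma7p2 (M K : nat) (qKL : R) :
  (0 < M)%nat ->
  1 < qKL <= INR M + 1 ->
  is_quasi_greedy M qKL (lam M) ->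
  qKL - 1 <= INR K -> (K <= M)%nat ->
  forall q : R, (U M q /\ U K q) <-> ((1 < q <= INR K + 1) /\ U M q).
Proof.
  intros _ _ _ _ HKM q. split.
  - intros [HM [HK _]]. split; [exact HK|exact HM].
  - intros [Hq HM]. split; [exact HM|]. now apply (U_restrict M).
Qed.
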